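(* Let $R$ be a ring with identity and $a,b,c,\alpha\in R$ such that $a$ has a $(b,c)$-inverse $a^\otimes$. The following are equivalent: (i) $\alpha$ is left $(b,c)$-invertible; (ii) $\alpha$ is right annihilator $(b,c)$-invertible; (iii) $1+(\alpha-a)a^\otimes$ is left invertible; (iv) $1+a^\otimes(\alpha-a)$ is left invertible.
   Context: For $x\in R$: $xR=\{xr:r\in R\}$, $Rx=\{rx:r\in R\}$, $x^\circ=\{r: xr=0\}$. $a$ is $(b,c)$-invertible if there is $y\in R$ with $y\in (bRy)\cap(yRc)$, $yab=b$, $cay=c$; such $y$ is unique, denoted $a^\otimes$. $\alpha$ is left $(b,c)$-invertible if there is $y$ with $Ry\subseteq Rc$ and $y\alpha b=b$; right annihilator $(b,c)$-invertible if there is $y$ with $c^\circ\subseteq y^\circ$ and $y\alpha b=b$. *)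

From mathcomp Require Import all_boot all_algebra.
Set Implicit Arguments. Unset Strict Implicit. Unset Printing Implicit Defensive.
Import GRing.Theory.
Local Open Scope ring_scope.

Definition bc_inverse (R : pzRingType) (a b c y : R) : Prop :=
  [/\ (exists r : R, y = b * r * y),
      (exists r : R, y = y * r * c),
      y * a * b = b & c * a * y = c].

Definition bc_invertible (R : pzRingType) (a b c : R) : Prop :=
  exists y : R, bc_inverse a b c y.

Definition left_ideal_sub (R : pzRingType) (y c : R) : Prop :=
  forall r : R, exists s : R, r * y = s * c.

Definition rann_sub (R : pzRingType) (c y : R) : Prop :=
  forall r : R, c * r = 0 -> y * r = 0.

Definition left_bc_invertible (R : pzRingType) (al b c : R) : Prop :=
  exists y : R, left_ideal_sub y c /\ y * al * b = b.

Definition rann_bc_invertible (R : pzRingType) (al b c : R) : Prop :=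
  exists y : R, rann_sub c y /\ y * al * b = b.

Definition left_invertible (R : pzRingType) (x : R) : Prop :=
  exists z : R, z * x = 1.

(* Write u = 1 + (al - a) y and v = 1 + y (al - a) for the (b,c)-inverse y of a.
   A right-annihilator witness z satisfies z a y = z (because c (1 - a y) = 0)
   and z al y = y (because y lies in bRy), hence z u = y, which makes
   1 - (al - a) z a left inverse of u.  By Jacobson's lemma v is then left
   invertible, and if w v = 1 then w y al b = w v b = b, so w y is a left
   (b,c)-witness since it lies in Rc together with y. *)

From mathcomp Require Import all_boot all_algebra.
Import GRing.Theory.
Local Open Scope ring_scope.

Lemma left_bc_rann_bc_invertible (R : pzRingType) (al b c : R) :
  left_bc_invertible al b c -> rann_bc_invertible al b c.
Proof.
case=> z [zRc zalb]; exists z; split=> // t ct0.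
have [u] := zRc 1; rewrite mul1r => ->.
by rewrite -mulrA ct0 mulr0.
Qed.

Lemma left_invertible_1_addM (R : pzRingType) (x y : R) :
  left_invertible (1 + x * y) -> left_invertible (1 + y * x).
Proof.
case=> w wK; exists (1 - y * w * x); rewrite mulrBl mul1r.
have -> : y * w * x * (1 + y * x) = y * (w * (1 + x * y)) * x.
  by rewrite !mulrDr !mulr1 !mulrDl !mulrA.
by rewrite wK mulr1 addrK.
Qed.

Lemma left_ideal_sub_mull (R : pzRingType) (w y c : R) :
  (exists s, y = y * s * c) -> left_ideal_sub (w * y) c.
Proof. by case=> s ys t; exists (t * w * y * s); rewrite {1}ys !mulrA. Qed.

Section BCInverse.

Variables (R : pzRingType) (a b c y : R).
Hypothesis y_bc_inverse : bc_inverse a b c y.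

Lemma rann_bc_mulr_bcinv {z : R} : rann_sub c z -> z * a * y = z.
Proof.
case: y_bc_inverse => _ _ _ cay zc.
have : z * (1 - a * y) = 0 by apply: zc; rewrite mulrBr mulr1 mulrA cay subrr.
by rewrite mulrBr mulr1 mulrA => /eqP; rewrite subr_eq0 => /eqP.
Qed.

Lemma rann_bc_left_invertible (al : R) :
  rann_bc_invertible al b c -> left_invertible (1 + (al - a) * y).
Proof.
case=> z [zc zalb]; exists (1 - (al - a) * z).
have zay : z * a * y = z := rann_bc_mulr_bcinv zc.
have zaly : z * al * y = y.
  by case: y_bc_inverse => [[r yb]] _ _ _; rewrite {1}yb !mulrA zalb -yb.
have zu : z * (1 + (al - a) * y) = y.
  by rewrite mulrDr mulr1 mulrA mulrBr mulrBl zay zaly addrC subrK.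
by rewrite [(1 - _) * _]mulrBl mul1r -mulrA zu addrK.
Qed.

Lemma left_invertible_left_bc (al : R) :
  left_invertible (1 + y * (al - a)) -> left_bc_invertible al b c.
Proof.
case: y_bc_inverse => _ yc yab _ [w wv]; exists (w * y); split.
  exact: left_ideal_sub_mull.
have vb : (1 + y * (al - a)) * b = y * al * b.
  by rewrite mulrDl mul1r mulrBr mulrBl yab addrC subrK.
by rewrite -[RHS]mul1r -wv -[RHS]mulrA vb !mulrA.
Qed.

End BCInverse.

Theorem theorem4p2 (R : pzRingType) (a b c al ainv : R) :
  bc_inverse a b c ainv ->
  [<-> left_bc_invertible al b c;
       rann_bc_invertible al b c;
       left_invertible (1 + (al - a) * ainv);
       left_invertible (1 + ainv * (al - a))].
Proof.
move=> ainvP; tfae.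
- exact: left_bc_rann_bc_invertible.
- exact: rann_bc_left_invertible.
- exact: left_invertible_1_addM.
- exact: left_invertible_left_bc.
Qed.
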